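(* Let $m\ge2$, $q\in(0,1)$, let $\psi$ be a completely monotone Archimedean copula generator and $Z$ a positive random variable with Laplace transform $\psi(t)=\mathbb E[e^{-tZ}]$ and cdf $F_Z$. Define $$\gamma_{min}=\int\min_{k\in\{1,\dots,m\}}\left\{\frac{\exp(-z\psi^{-1}(kq/m))}{kq/m}\right\}dF_Z(z),\qquad g(x\mid z)=\frac{\exp(-zx)}{\psi(x)},\qquad z^*=\frac{\log m}{\psi^{-1}(q/m)-\psi^{-1}(q)}.$$ Then $$\gamma_{min}=1-\int_0^{z^*}\bigl(g(\psi^{-1}(q/m)\mid z)-g(\psi^{-1}(q)\mid z)\bigr)dF_Z(z)=1-\mathbb E\bigl[(g(\psi^{-1}(q/m)\mid Z)-g(\psi^{-1}(q)\mid Z))\mathbf 1_{[0,z^*]}(Z)\bigr].$$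
   Context: Completely monotone generator: $\psi:[0,\infty)\to[0,1]$, $\psi(0)=1$, $\lim_{x\to\infty}\psi(x)=0$, $(-1)^d\psi^{(d)}\ge0$ for all $d\in\mathbb N$; $\psi^{-1}$ is its inverse. *)

From mathcomp Require Import all_boot all_order all_algebra.
From mathcomp Require Import all_classical all_reals all_analysis.
Set Implicit Arguments. Unset Strict Implicit. Unset Printing Implicit Defensive.
Import Order.TTheory GRing.Theory Num.Theory.
Import numFieldNormedType.Exports.
Local Open Scope classical_set_scope.
Local Open Scope ring_scope.

Definition gcond (R : realType) (psi : R -> R) (x z : R) : R :=
  expR (- (z * x)) / psi x.

(* min_{k in {1,...,m}} exp(-z psiinv(kq/m)) / (kq/m) ; the fold starts at the
   k = 1 term, which is itself among the minimized terms (minr is idempotent). *)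
Definition min_term (R : realType) (psiinv : R -> R) (m : nat) (q z : R) : R :=
  let h := fun k : nat => expR (- (z * psiinv (k%:R * q / m%:R))) / (k%:R * q / m%:R) in
  \big[Num.min/h 1%N]_(1 <= k < m.+1) h k.

Definition CM_generator (R : realType) (psi : R -> R) : Prop :=
  [/\ forall t, 0 <= t -> 0 <= psi t <= 1,
      psi 0 = 1,
      psi x @[x --> +oo] --> (0 : R),
      forall (d : nat) (x : R), 0 < x -> derivable (derive1n d psi) x 1
    & forall (d : nat) (x : R), 0 < x -> 0 <= (-1) ^+ d * derive1n d psi x].

From mathcomp Require Import all_boot all_order all_algebra.
From mathcomp Require Import all_classical all_reals all_analysis.
From mathcomp Require Import ring lra measurable_realfun.
Set Implicit Arguments. Unset Strict Implicit. Unset Printing Implicit Defensive.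
Import Order.TTheory GRing.Theory Num.Theory.
Local Open Scope classical_set_scope.
Local Open Scope ring_scope.

(* Put a = psi^-1(q/m) and b = psi^-1(q).  The k-th term of the minimum is
   g(x | z) with x = psi^-1(kq/m) in [b, a], and 1 / g(x | z) = psi(x) e^(zx)
   = E[e^(x(z - Z))] is convex in x, hence largest at an endpoint of [b, a]:
   the minimum is min(g(a | z), g(b | z)), attained at k = 1 or k = m.  Since
   psi(b) = m psi(a), g(b | z) <= g(a | z) exactly when z <= z*, so the minimum
   is g(a | z) - (g(a | z) - g(b | z)) 1_[0, z*](z), and E[g(a | Z)] =
   E[e^(-aZ)] / psi(a) = 1. *)

Lemma expR_convex_comb (R : realType) (t u v : R) : 0 <= t <= 1 ->
  expR (t * u + (1 - t) * v) <= t * expR u + (1 - t) * expR v.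
Proof.
move=> /andP[t0 t1]; have := convex_expR (Itv01 t0 t1) u v.
by rewrite !convRE.
Qed.

Lemma ge0_integralB d (T : measurableType d) (R : realType)
    (mu : {measure set T -> \bar R}) (f h : T -> R) :
  measurable_fun setT f -> measurable_fun setT h ->
  (forall x, 0 <= h x) -> (forall x, h x <= f x) ->
  (\int[mu]_x (f x)%:E)%E \is a fin_num ->
  (\int[mu]_x (f x - h x)%:E = \int[mu]_x (f x)%:E - \int[mu]_x (h x)%:E)%E.
Proof.
move=> mf mh h0 hf ffin.
have hfin : (\int[mu]_x (h x)%:E)%E \is a fin_num.
  rewrite ge0_fin_numE; last by apply: integral_ge0 => x _; rewrite lee_fin.
  apply: le_lt_trans (_ : _ <= \int[mu]_x (f x)%:E)%E _; last by rewrite ltey_eq ffin.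
  apply: ge0_le_integral => //; first by move=> x _; rewrite lee_fin.
  - exact/measurable_EFinP.
  - exact/measurable_EFinP.
  - by move=> x _; rewrite lee_fin.
have -> : (\int[mu]_x (f x)%:E = \int[mu]_x (f x - h x)%:E + \int[mu]_x (h x)%:E)%E.
  rewrite -ge0_integralD //.
  - by apply: eq_integral => x _; rewrite -EFinD subrK.
  - by move=> x _; rewrite lee_fin subr_ge0.
  - exact/measurable_EFinP/measurable_funB.
  - by move=> x _; rewrite lee_fin.
  - exact/measurable_EFinP.
by rewrite addeK.
Qed.

Lemma inverse_antitone (R : realType) (f g : R -> R) :
  (forall x y, 0 <= x -> x <= y -> f y <= f x) ->
  (forall y, 0 < y <= 1 -> 0 <= g y /\ f (g y) = y) ->
  forall y y', 0 < y -> y <= y' -> y' <= 1 -> g y' <= g y.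
Proof.
move=> f_anti fgK y y' y0 yy' y'1.
have [gy0 fgy] := fgK y (andb_true_intro (conj y0 (le_trans yy' y'1))).
have [_ fgy'] := fgK y' (andb_true_intro (conj (lt_le_trans y0 yy') y'1)).
rewrite leNgt; apply/negP => lt_gy.
have := f_anti _ _ gy0 (ltW lt_gy); rewrite fgy fgy' => y'y.
by move: lt_gy; rewrite (le_anti (andb_true_intro (conj yy' y'y))) ltxx.
Qed.

Lemma inverse_lt (R : realType) (f g : R -> R) :
  (forall x y, 0 <= x -> x <= y -> f y <= f x) ->
  (forall y, 0 < y <= 1 -> 0 <= g y /\ f (g y) = y) ->
  forall y y', 0 < y -> y < y' -> y' <= 1 -> g y' < g y.
Proof.
move=> f_anti fgK y y' y0 yy' y'1.
rewrite lt_neqAle (inverse_antitone f_anti fgK y0 (ltW yy') y'1) andbT.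
have [_ fgy] := fgK y (andb_true_intro (conj y0 (le_trans (ltW yy') y'1))).
have [_ fgy'] := fgK y' (andb_true_intro (conj (lt_trans y0 yy') y'1)).
by apply: contraTneq yy' => e; rewrite -fgy -fgy' e ltxx.
Qed.

Lemma integral_distribution_indic (R : realType) d (T : measurableType d)
    (P : probability T R) (X : {RV P >-> R}) (f : R -> R) (A : set R) :
  measurable A -> measurable_fun setT f -> (forall x, A x -> 0 <= f x) ->
  (\int[distribution P X]_(x in A) (f x)%:E =
   \int[P]_w (f (X w) * \1_A (X w))%:E)%E.
Proof.
move=> mA mf f0; rewrite integral_mkcond.
have fA_ge0 x : 0 <= f x * \1_A x.
  by rewrite indicE; case: (boolP (x \in A)) => [/set_mem/f0|_]; rewrite ?mulr1 ?mulr0.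
rewrite (eq_integral (fun x => (f x * \1_A x)%:E)); last first.
  by move=> x _; rewrite /patch indicE; case: ifP; rewrite ?mulr1 ?mulr0.
rewrite ge0_integral_distribution //.
by apply/measurable_EFinP/measurable_funM => //; exact: measurable_indic.
Qed.

Lemma gcondE (R : realType) (psi : R -> R) (x z : R) :
  gcond psi x z = (psi x * expR (z * x))^-1.
Proof. by rewrite /gcond expRN invfM mulrC. Qed.

Lemma gcond_gt0 (R : realType) (psi : R -> R) (x z : R) :
  0 < psi x -> 0 < gcond psi x z.
Proof. by move=> px0; rewrite gcondE invr_gt0 mulr_gt0 ?expR_gt0. Qed.

Lemma measurable_gcond (R : realType) (psi : R -> R) (x : R) :
  measurable_fun setT (gcond psi x).
Proof.
apply: measurable_funM => //; apply: measurableT_comp; first exact: measurable_expR.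
apply: measurable_funN; exact: mulrr_measurable.
Qed.

Lemma gcond_le_gcondE (R : realType) (psi : R -> R) (a b c z : R) :
  b < a -> 0 < c -> 0 < psi a -> psi b = c * psi a ->
  (gcond psi b z <= gcond psi a z) = (z <= ln c / (a - b)).
Proof.
move=> ba c0 pa0 pbE.
have pb0 : 0 < psi b by rewrite pbE mulr_gt0.
rewrite !gcondE lef_pV2 ?posrE ?mulr_gt0 ?expR_gt0 // pbE -mulrA mulrCA ler_pM2l //.
rewrite ler_pdivlMr ?subr_gt0 // -ler_pdivrMr ?expR_gt0 // -expRN -expRD.
by rewrite -[X in _ <= X](lnK c0) ler_expR mulrBr.
Qed.

Lemma min_gcond_indicator (R : realType) (psi : R -> R) (a b c z : R) :
  b < a -> 0 < c -> 0 < psi a -> psi b = c * psi a -> 0 <= z ->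
  Num.min (gcond psi a z) (gcond psi b z) =
  gcond psi a z - (gcond psi a z - gcond psi b z) * \1_[set` `[0, ln c / (a - b)]] z.
Proof.
move=> ba c0 pa0 pbE z0; rewrite indicE mem_setE in_itv /= z0 /=.
have := gcond_le_gcondE z ba c0 pa0 pbE.
case: (lerP z (ln c / (a - b))) => _ cross.
- by rewrite min_r ?cross // mulr1 opprB addrC subrK.
- by rewrite min_l ?mulr0 ?subr0 // ltW // ltNge cross.
Qed.

Section laplace_transform.
Context {R : realType} {d : measure_display} {T : measurableType d}.
Variables (P : probability T R) (Z : {RV P >-> R}) (psi : R -> R).
Hypothesis Z_ge0 : forall w, 0 <= Z w.
Hypothesis psi_laplace : forall t, 0 <= t ->
  (psi t)%:E = (\int[P]_w (expR (- (t * Z w)))%:E)%E.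

Lemma measurable_expR_tilt (x z : R) :
  measurable_fun setT (fun w => expR (x * (z - Z w))).
Proof.
apply: measurableT_comp; first exact: measurable_expR.
by apply: measurable_funM => //; apply: measurable_funB.
Qed.

Lemma tilted_laplace (x z : R) : 0 <= x ->
  (psi x * expR (z * x))%:E = (\int[P]_w (expR (x * (z - Z w)))%:E)%E.
Proof.
move=> x0; rewrite EFinM psi_laplace // -ge0_integralZr //.
- by apply: eq_integral => w _; rewrite -EFinM -expRD; congr (expR _)%:E; ring.
apply/measurable_EFinP; apply: measurableT_comp => //.
exact/measurable_funN/measurable_funM.
Qed.

Lemma laplace_antitone (x y : R) : 0 <= x -> x <= y -> psi y <= psi x.
Proof.
move=> x0 xy.
have laplace0 v : 0 <= v -> (psi v)%:E = (\int[P]_w (expR (v * (0 - Z w)))%:E)%E.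
  by move=> v0; rewrite -tilted_laplace // mul0r expR0 mulr1.
rewrite -lee_fin !laplace0 ?(le_trans x0 xy) //.
apply: ge0_le_integral => //.
- exact/measurable_EFinP/measurable_expR_tilt.
- exact/measurable_EFinP/measurable_expR_tilt.
- by move=> w _; rewrite lee_fin ler_expR sub0r ler_wnM2r // oppr_le0.
Qed.

Lemma tilted_laplace_convex (z a b t : R) : 0 <= a -> 0 <= b -> 0 <= t <= 1 ->
  psi (t * a + (1 - t) * b) * expR (z * (t * a + (1 - t) * b)) <=
    t * (psi a * expR (z * a)) + (1 - t) * (psi b * expR (z * b)).
Proof.
move=> a0 b0 /andP[t0 t1]; set x := t * a + (1 - t) * b.
have t1' : 0 <= 1 - t by rewrite subr_ge0.
have x0 : 0 <= x by rewrite /x addr_ge0 // mulr_ge0.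
have scale_tilt (k y : R) : 0 <= k -> 0 <= y ->
    ((k * (psi y * expR (z * y)))%:E = \int[P]_w (k * expR (y * (z - Z w)))%:E)%E.
  move=> k0 y0; rewrite EFinM tilted_laplace // -ge0_integralZl_EFin //.
  exact/measurable_EFinP/measurable_expR_tilt.
have mtilt (k y : R) : measurable_fun setT (fun w => (k * expR (y * (z - Z w)))%:E).
  by apply/measurable_EFinP/measurable_funM => //; exact: measurable_expR_tilt.
rewrite -lee_fin EFinD !scale_tilt // tilted_laplace // -ge0_integralD //.
- apply: ge0_le_integral => //.
  + exact/measurable_EFinP/measurable_expR_tilt.
  + exact: emeasurable_funD.
  + move=> w _; rewrite -EFinD lee_fin.
    have -> : x * (z - Z w) = t * (a * (z - Z w)) + (1 - t) * (b * (z - Z w)).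
      by rewrite /x; ring.
    by apply: expR_convex_comb; rewrite t0 t1.
- by move=> w _; rewrite lee_fin mulr_ge0 // expR_ge0.
- by move=> w _; rewrite lee_fin mulr_ge0 // expR_ge0.
Qed.

Lemma tilted_laplace_le_max (z a b x : R) : 0 <= b -> b <= x -> x <= a ->
  psi x * expR (z * x) <=
    Num.max (psi a * expR (z * a)) (psi b * expR (z * b)).
Proof.
move=> b0 bx xa; have a0 := le_trans b0 (le_trans bx xa).
have [ba|ab] := eqVneq b a.
  have -> : x = a by apply/le_anti; rewrite xa -ba bx.
  by rewrite le_max lexx.
have {ab} ba : b < a by rewrite lt_neqAle ab (le_trans bx xa).
set t := (x - b) / (a - b).
have t0 : 0 <= t by rewrite divr_ge0 ?subr_ge0 ?(ltW ba).
have t1 : t <= 1 by rewrite ler_pdivrMr ?subr_gt0 // mul1r lerD2r.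
have xE : x = t * a + (1 - t) * b by rewrite /t; field; rewrite subr_eq0 gt_eqF.
have := tilted_laplace_convex z a0 b0 (andb_true_intro (conj t0 t1)); rewrite -xE.
move/le_trans; apply.
set A := psi a * expR (z * a); set B := psi b * expR (z * b).
have maxA : A <= Num.max A B by rewrite le_max lexx.
have maxB : B <= Num.max A B by rewrite le_max lexx orbT.
nra.
Qed.

Lemma gcond_ge_min (z a b x : R) : 0 <= b -> b <= x -> x <= a -> 0 < psi a ->
  Num.min (gcond psi a z) (gcond psi b z) <= gcond psi x z.
Proof.
move=> b0 bx xa pa0; have x0 := le_trans b0 bx.
have pb0 : 0 < psi b := lt_le_trans pa0 (laplace_antitone b0 (le_trans bx xa)).
have px0 : 0 < psi x := lt_le_trans pa0 (laplace_antitone x0 xa).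
have := tilted_laplace_le_max z b0 bx xa; rewrite !gcondE.
set A := psi a * _; set B := psi b * _; set X := psi x * _ => Xmax.
have [A0 B0 X0] : [/\ 0 < A, 0 < B & 0 < X] by rewrite !mulr_gt0 ?expR_gt0.
have [AB|BA] := leP A B.
- by rewrite min_r ?lef_pV2 ?posrE // -(max_r AB).
- by rewrite min_l ?lef_pV2 ?posrE ?(ltW BA) // -(max_l (ltW BA)).
Qed.

Lemma integral_gcond (x : R) : 0 <= x -> 0 < psi x ->
  (\int[P]_w (gcond psi x (Z w))%:E)%E = 1%E.
Proof.
move=> x0 px0.
have -> : 1%E = ((psi x * expR (0 * x)) * (psi x)^-1)%:E.
  by rewrite mul0r expR0 mulr1 mulfV ?gt_eqF.
rewrite EFinM tilted_laplace // -ge0_integralZr //.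
- by apply: eq_integral => w _; rewrite /gcond -EFinM sub0r mulrN (mulrC (Z w)).
- exact/measurable_EFinP/measurable_expR_tilt.
- by rewrite lee_fin invr_ge0 ltW.
Qed.

Lemma min_term_gcond (psiinv : R -> R) (m : nat) (q z : R) :
  (0 < m)%N -> 0 < q <= 1 ->
  (forall y, 0 < y <= 1 -> 0 <= psiinv y /\ psi (psiinv y) = y) ->
  min_term psiinv m q z =
    Num.min (gcond psi (psiinv (q / m%:R)) z) (gcond psi (psiinv q) z).
Proof.
move=> m0 /[dup] q01 /andP[q0 q1] psiinvK.
have m0' : 0 < m%:R :> R by rewrite ltr0n.
have qm0 : 0 < q / m%:R by rewrite divr_gt0.
have qm_le : q / m%:R <= q by rewrite ler_pdivrMr // ler_peMr ?ler1n // ltW.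
have kq_range k : (1 <= k <= m)%N -> q / m%:R <= k%:R * q / m%:R <= q.
  case/andP=> k1 km; rewrite -mulrA ler_peMl ?ler1n ?(ltW qm0) //=.
  by rewrite mulrA ler_pdivrMr // [q * _]mulrC ler_pM2r // ler_nat.
have inK y : q / m%:R <= y <= q -> 0 < y <= 1.
  by case/andP=> y1 y2; rewrite (lt_le_trans qm0 y1) (le_trans y2 q1).
have termE y : q / m%:R <= y <= q ->
    expR (- (z * psiinv y)) / y = gcond psi (psiinv y) z.
  by move=> /inK /psiinvK[_ pK]; rewrite /gcond pK.
have term_ge y : q / m%:R <= y <= q ->
    Num.min (gcond psi (psiinv (q / m%:R)) z) (gcond psi (psiinv q) z)
    <= gcond psi (psiinv y) z.
  move=> /[dup] /andP[y1 y2] /inK y01.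
  have anti := inverse_antitone (@laplace_antitone) psiinvK.
  apply: gcond_ge_min; first exact: (psiinvK q q01).1.
  - by apply: anti => //; rewrite (lt_le_trans qm0 y1).
  - by apply: anti => //; case/andP: y01.
  - by rewrite (psiinvK _ (inK _ _)).2 // lexx qm_le.
rewrite /min_term; apply/le_anti/andP; split.
- rewrite le_min; apply/andP; split.
  + apply: (bigmin_inf_seq _ 1%N) => //; first by rewrite mem_index_iota.
    by rewrite mul1r termE // lexx.
  + apply: (bigmin_inf_seq _ m) => //; first by rewrite mem_index_iota ltnSn m0.
    by rewrite mulrAC divff ?gt_eqF // mul1r termE // qm_le lexx.
- rewrite big_nat_cond; apply: le_bigmin => [|k /andP[/andP[k1 km] _]].
    by rewrite mul1r termE ?lexx // term_ge // lexx.
  have kq := kq_range k (andb_true_intro (conj k1 km)).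
  by rewrite termE // term_ge.
Qed.

Lemma integral_min_gcond (a b c : R) :
  0 <= b -> b < a -> 0 < c -> 0 < psi a -> psi b = c * psi a ->
  let S := [set` `[0, ln c / (a - b)]] in
  (\int[P]_w (Num.min (gcond psi a (Z w)) (gcond psi b (Z w)))%:E =
   1 - \int[P]_w ((gcond psi a (Z w) - gcond psi b (Z w)) * \1_S (Z w))%:E)%E.
Proof.
move=> b0 ba c0 pa0 pbE S.
have pb0 : 0 < psi b by rewrite pbE mulr_gt0.
have minE w := min_gcond_indicator ba c0 pa0 pbE (Z_ge0 w).
have gap_ge0 z : 0 <= (gcond psi a z - gcond psi b z) * \1_S z.
  rewrite indicE; case: (boolP (z \in S)) => [|_]; last by rewrite mulr0.
  rewrite mem_setE in_itv /= => /andP[_ zS].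
  by rewrite mulr1 subr_ge0 (gcond_le_gcondE z ba c0 pa0 pbE).
under eq_integral => w _ do rewrite minE.
rewrite ge0_integralB ?integral_gcond ?(le_trans b0 (ltW ba)) //.
- exact: measurableT_comp (measurable_gcond psi a) _.
- have mgap : measurable_fun setT (fun z => (gcond psi a z - gcond psi b z) * \1_S z).
    apply: measurable_funM; last by apply: measurable_indic; exact: measurable_itv.
    by apply: measurable_funB; exact: measurable_gcond.
  exact: measurableT_comp mgap _.
- by move=> w; rewrite -subr_ge0 -minE le_min !ltW ?gcond_gt0.
Qed.

End laplace_transform.

Theorem lemma1 (R : realType) (d : measure_display) (T : measurableType d)
  (P : probability T R) (Z : {RV P >-> R}) (psi psiinv : R -> R) (m : nat) (q : R) :
  (2 <= m)%N -> 0 < q < 1 ->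
  CM_generator psi ->
  (forall w, 0 < Z w) ->
  (forall t, 0 <= t -> ((psi t)%:E = \int[P]_w (expR (- (t * Z w)))%:E)%E) ->
  (forall y, 0 < y <= 1 -> 0 <= psiinv y /\ psi (psiinv y) = y) ->
  let zstar := ln m%:R / (psiinv (q / m%:R) - psiinv q) in
  let S : set R := [set` `[0, zstar]] in
  let gamma_min := (\int[distribution P Z]_z (min_term psiinv m q z)%:E)%E in
  let I := (\int[distribution P Z]_(z in S)
             (gcond psi (psiinv (q / m%:R)) z - gcond psi (psiinv q) z)%:E)%E in
  gamma_min = (1 - I)%E /\
  I = (\int[P]_w ((gcond psi (psiinv (q / m%:R)) (Z w) - gcond psi (psiinv q) (Z w))
                  * \1_(S) (Z w))%:E)%E.
Proof.
move=> m2 /andP[q0 q1] _ Z_gt0 psi_laplace psiinvK zstar S gamma_min I.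
have Z_ge0 w : 0 <= Z w := ltW (Z_gt0 w).
have m0 : 0 < m%:R :> R by rewrite ltr0n (ltnW m2).
have q01 : 0 < q <= 1 by rewrite q0 ltW.
have qm_lt_q : q / m%:R < q by rewrite ltr_pdivrMr // ltr_pMr // ltr1n.
have qm01 : 0 < q / m%:R <= 1 by rewrite divr_gt0 // (le_trans (ltW qm_lt_q)) ?ltW.
have [_ psi_a] := psiinvK _ qm01; have [b0 psi_b] := psiinvK _ q01.
have ba := inverse_lt (laplace_antitone Z_ge0 psi_laplace) psiinvK
  (divr_gt0 q0 m0) qm_lt_q (ltW q1).
set a := psiinv (q / m%:R) in psi_a ba zstar S I gamma_min *.
set b := psiinv q in b0 psi_b ba zstar S I gamma_min *.
have psi_bE : psi b = m%:R * psi a by rewrite psi_a psi_b mulrCA mulfV ?gt_eqF ?mulr1.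
have psi_a0 : 0 < psi a by rewrite psi_a divr_gt0.
have psi_b0 : 0 < psi b by rewrite psi_b.
have hI : I = (\int[P]_w ((gcond psi a (Z w) - gcond psi b (Z w)) * \1_S (Z w))%:E)%E.
  apply: integral_distribution_indic; first exact: measurable_itv.
    by apply: measurable_funB; exact: measurable_gcond.
  move=> z; rewrite /S /= in_itv /= => /andP[_ zS].
  by rewrite subr_ge0 (gcond_le_gcondE z ba m0 psi_a0 psi_bE).
split=> //; rewrite hI -(integral_min_gcond Z_ge0 psi_laplace b0 ba m0 psi_a0 psi_bE).
rewrite /gamma_min.
under eq_integral do rewrite (min_term_gcond Z_ge0 psi_laplace _ (ltnW m2) q01 psiinvK).
rewrite ge0_integral_distribution //.
- apply/measurable_EFinP.
  exact: measurable_minr (measurable_gcond _ _) (measurable_gcond _ _).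
- by move=> z; rewrite lee_fin le_min !ltW ?gcond_gt0.
Qed.
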